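(* Let $\mathcal{A},\mathcal{B}$ be test spaces with outcome sets $X,Y$, and let $\omega$ be a probability weight on $\mathcal{A}\times\mathcal{B}$. Then $\omega$ exhibits no influence from $\mathcal{B}$ to $\mathcal{A}$ iff $\omega\in\Pr(\overrightarrow{\mathcal{A}\mathcal{B}})$; $\omega$ exhibits no influence from $\mathcal{A}$ to $\mathcal{B}$ iff $\omega\in\Pr(\overleftarrow{\mathcal{A}\mathcal{B}})$; and $\omega$ is non-signaling iff $\omega\in\Pr(\overrightarrow{\mathcal{A}\mathcal{B}}\cup\overleftarrow{\mathcal{A}\mathcal{B}})$.
   Context: A test space is an irredundant collection of nonempty sets (tests). For a collection $\mathcal{T}$ of subsets of $X\times Y$, $\Pr(\mathcal{T})$ is the set of functions $\omega:X\times Y\to[0,1]$ with $\sum_{(x,y)\in S}\omega(x,y)=1$ for every $S\in\mathcal{T}$. $\mathcal{A}\times\mathcal{B}=\{E\times F:E\in\mathcal{A},F\in\mathcal{B}\}$. The forward product $\overrightarrow{\mathcal{A}\mathcal{B}}$ consists of all sets $\bigcup_{x\in E}\{x\}\times F_x$ with $E\in\mathcal{A}$ and $F:E\to\mathcal{B}$; the backward product $\overleftarrow{\mathcal{A}\mathcal{B}}$ consists of all sets $\bigcup_{y\in F}E_y\times\{y\}$ with $F\in\mathcal{B}$ and $E:F\to\mathcal{A}$. Write $\omega(E,y)=\sum_{x\in E}\omega(x,y)$ and $\omega(x,F)=\sum_{y\in F}\omega(x,y)$. $\omega$ exhibits no influence from $\mathcal{A}$ to $\mathcal{B}$ if $\omega(E,y)=\omega(E',y)$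 for all $E,E'\in\mathcal{A}$, $y\in Y$; no influence from $\mathcal{B}$ to $\mathcal{A}$ if $\omega(x,F)=\omega(x,F')$ for all $F,F'\in\mathcal{B}$, $x\in X$; and is non-signaling if both hold. *)

(* Outcome sets are arbitrary (possibly infinite)
   choiceTypes; sums over (possibly infinite) sets are unordered sums of
   nonnegative terms, i.e. esum in the extended reals. *)
From HB Require Import structures.
From mathcomp Require Import all_boot all_order all_algebra.
From mathcomp Require Import all_classical all_reals.
From mathcomp Require Import esum.
Set Implicit Arguments. Unset Strict Implicit. Unset Printing Implicit Defensive.
Import Order.TTheory GRing.Theory Num.Theory.
Local Open Scope classical_set_scope.
Local Open Scope ring_scope.

Definition test_space (X : Type) (A : set (set X)) : Prop :=
  [/\ (forall E, A E -> E !=set0),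
      (forall E F, A E -> A F -> E `<=` F -> E = F) &
      \bigcup_(E in A) E = setT].

Section Defs.
Variables (R : realType) (X Y : choiceType).

Definition Pr (T : set (set (X * Y))) : set (X * Y -> R) :=
  [set w | (forall p, 0 <= w p <= 1) /\
           (forall S, T S -> (\esum_(p in S) (w p)%:E = 1)%E)].

Definition prod_ts (A : set (set X)) (B : set (set Y)) : set (set (X * Y)) :=
  [set E `*` F | E in A & F in B].

Definition fwd_prod (A : set (set X)) (B : set (set Y)) : set (set (X * Y)) :=
  [set S | exists E (F : X -> set Y), [/\ A E, (forall x, E x -> B (F x)) &
           S = \bigcup_(x in E) ([set x] `*` F x)]].

Definition bwd_prod (A : set (set X)) (B : set (set Y)) : set (set (X * Y)) :=
  [set S | exists F (E : Y -> set X), [/\ B F, (forall y, F y -> A (E y)) &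
           S = \bigcup_(y in F) (E y `*` [set y])]].

Definition margL (w : X * Y -> R) (E : set X) (y : Y) : \bar R :=
  (\esum_(x in E) (w (x, y))%:E)%E.
Definition margR (w : X * Y -> R) (x : X) (F : set Y) : \bar R :=
  (\esum_(y in F) (w (x, y))%:E)%E.

Definition no_infl_AB (A : set (set X)) (B : set (set Y)) (w : X * Y -> R) :=
  forall E E' y, A E -> A E' -> margL w E y = margL w E' y.
Definition no_infl_BA (A : set (set X)) (B : set (set Y)) (w : X * Y -> R) :=
  forall F F' x, B F -> B F' -> margR w x F = margR w x F'.
Definition non_signaling A B w := no_infl_AB A B w /\ no_infl_BA A B w.
End Defs.

From mathcomp Require Import all_boot all_order all_algebra.
From mathcomp Require Import all_classical all_reals esum.
Set Implicit Arguments. Unset Strict Implicit. Unset Printing Implicit Defensive.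
Import Order.TTheory GRing.Theory Num.Theory.
Local Open Scope classical_set_scope.
Local Open Scope ring_scope.

(* A forward test \bigcup_(x in E) {x} * F x has weight \sum_(x in E) w(x, F x),
   while the product test E * F has weight \sum_(x in E) w(x, F).  If w(x, -)
   has the same mass on every test of B, the two agree, so every forward test
   has weight 1.  Conversely, given x and tests F, F' of B, pick a test E of A
   containing x: the forward tests using F everywhere, resp. F' at x and F
   elsewhere, both have weight 1 and differ in the single term at x, hence
   w(x, F) = w(x, F').  The backward statement is the forward one for the
   transposed weight w \o swap_pair, and the non-signaling one is their
   conjunction, as Pr (T `|` T') = Pr T `&` Pr T'. *)

Section esum_one_term.
Variables (R : realType) (T : choiceType).

Lemma esumD1 (E : set T) (x : T) (f : T -> \bar R) :
  E x -> (forall i, E i -> 0 <= f i)%E ->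
  \esum_(i in E) f i = (f x + \esum_(i in E `\ x) f i)%E.
Proof.
move=> Ex f0; rewrite (esumID [set x]) // setIidr; last by move=> _ ->.
by rewrite esum_set1 // f0.
Qed.

Lemma esum_cancelD1 (E : set T) (x : T) (f g : T -> \bar R) :
  E x -> (forall i, E i -> 0 <= f i)%E -> (forall i, E i -> 0 <= g i)%E ->
  (forall i, E i -> i != x -> f i = g i) ->
  \esum_(i in E) f i = \esum_(i in E) g i ->
  \esum_(i in E) f i \is a fin_num -> f x = g x.
Proof.
move=> Ex f0 g0 fg efg ffin.
have rest : \esum_(i in E `\ x) f i = \esum_(i in E `\ x) g i.
  by apply: eq_esum => i [Ei /eqP]; apply: fg.
rewrite (esumD1 Ex f0) (esumD1 Ex g0) rest in efg ffin.
have restfin : \esum_(i in E `\ x) g i \is a fin_num.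
  by move: ffin; rewrite fin_numD => /andP[].
by rewrite -(addeK (f x) restfin) efg addeK.
Qed.

End esum_one_term.

Section probability_weights.
Variables (R : realType) (X Y : choiceType).
Implicit Types (T : set (set (X * Y))) (w : X * Y -> R).

Lemma Pr_ge0 T w : Pr T w -> forall p, 0 <= w p.
Proof. by move=> [w01 _] p; case/andP: (w01 p). Qed.

Lemma Pr_setU T T' w : Pr (T `|` T') w <-> Pr T w /\ Pr T' w.
Proof.
split=> [[w01 wTT']|[[w01 wT] [_ wT']]].
  by split; split=> // S TS; apply: wTT'; [left|right].
by split=> // S [/wT|/wT'].
Qed.

End probability_weights.

Section transpose.
Variables (R : realType) (X Y : choiceType).

Definition transpose_ts (T : set (set (X * Y))) : set (set (Y * X)) :=
  [set swap_pair @^-1` S | S in T].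

Lemma esum_swap_pair (f : X * Y -> \bar R) (S : set (X * Y)) :
  \esum_(p in S) f p = \esum_(q in swap_pair @^-1` S) f (swap_pair q).
Proof.
apply: reindex_esum; split.
- by move=> q.
- by move=> [? ?] [? ?] _ _ [-> ->].
- by move=> [x y] Sxy; exists (y, x).
Qed.

Lemma Pr_transpose (T : set (set (X * Y))) (w : X * Y -> R) :
  Pr (transpose_ts T) (w \o swap_pair) <-> Pr T w.
Proof.
split=> [[w01 wT]|[w01 wT]]; split.
- by move=> [x y]; apply: (w01 (y, x)).
- by move=> S TS; rewrite esum_swap_pair; apply: wT; exists S.
- by move=> [y x]; apply: (w01 (x, y)).
- by move=> _ [S TS <-]; rewrite -(esum_swap_pair (fun p => (w p)%:E)) wT.
Qed.

Lemma swap_pair_setX (E : set X) (F : set Y) :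
  swap_pair @^-1` (E `*` F) = F `*` E.
Proof. by apply/seteqP; split=> -[? ?] [? ?]; split. Qed.

Lemma swap_pair_bigcup_setX1 (F : set Y) (E : Y -> set X) :
  swap_pair @^-1` (\bigcup_(y in F) (E y `*` [set y])) =
  \bigcup_(y in F) ([set y] `*` E y).
Proof. by apply/seteqP; split=> -[y x] [y' Fy' /= [? ?]]; exists y'. Qed.

Lemma transpose_prod_ts (A : set (set X)) (B : set (set Y)) :
  transpose_ts (prod_ts A B) = prod_ts B A.
Proof.
apply/seteqP; split=> S.
  move=> [_ [E AE [F BF <-]] <-]; rewrite swap_pair_setX.
  by exists F => //; exists E.
move=> [F BF [E AE <-]]; rewrite -swap_pair_setX.
by exists (E `*` F) => //; exists E => //; exists F.
Qed.

Lemma transpose_bwd_prod (A : set (set X)) (B : set (set Y)) :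
  transpose_ts (bwd_prod A B) = fwd_prod B A.
Proof.
apply/seteqP; split=> S.
  move=> [_ [F [E [BF AE ->]]] <-]; rewrite swap_pair_bigcup_setX1.
  by exists F, E.
move=> [F [E [BF AE ->]]]; rewrite -swap_pair_bigcup_setX1.
by exists (\bigcup_(y in F) (E y `*` [set y])) => //; exists F, E.
Qed.

Lemma no_infl_AB_transpose (A : set (set X)) (B : set (set Y)) (w : X * Y -> R) :
  no_infl_AB A B w <-> no_infl_BA B A (w \o swap_pair).
Proof. by []. Qed.

End transpose.

Section forward_product.
Variables (R : realType) (X Y : choiceType).
Variables (A : set (set X)) (B : set (set Y)).
Implicit Type w : X * Y -> R.

Lemma margR_ge0 w x F : (forall p, 0 <= w p) -> (0 <= margR w x F)%E.
Proof. by move=> w0; apply: esum_ge0 => y _; rewrite lee_fin. Qed.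

Lemma esum_fwd_test w (E : set X) (F : X -> set Y) : (forall p, 0 <= w p) ->
  (\esum_(p in \bigcup_(x in E) ([set x] `*` F x)) (w p)%:E =
   \esum_(x in E) margR w x (F x))%E.
Proof.
move=> w0; rewrite bigcupX1l /margR esum_esum; first by apply: eq_esum => -[].
by move=> *; rewrite lee_fin.
Qed.

Hypothesis A_neq0 : forall E, A E -> E !=set0.

Lemma no_infl_BA_Pr_fwd w :
  Pr (prod_ts A B) w -> no_infl_BA A B w -> Pr (fwd_prod A B) w.
Proof.
move=> wPr noBA; have w0 := Pr_ge0 wPr; case: wPr => w01 wAB.
split=> // _ [E [F [AE BF ->]]].
have [x0 Ex0] := A_neq0 AE.
have prod_test_sum1 : (\esum_(x in E) margR w x (F x0) = 1)%E.
  rewrite -esum_fwd_test // bigcupX1l; apply: wAB.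
  by exists E => //; exists (F x0); first exact: BF.
rewrite esum_fwd_test // -prod_test_sum1; apply: eq_esum => x Ex.
by apply: noBA; apply: BF.
Qed.

Hypothesis A_cover : \bigcup_(E in A) E = setT.

Lemma Pr_fwd_no_infl_BA w : Pr (fwd_prod A B) w -> no_infl_BA A B w.
Proof.
move=> wPr F F' x BF BF'; have w0 := Pr_ge0 wPr.
have [E AE Ex] : (\bigcup_(E in A) E) x by rewrite A_cover.
pose G z := if z == x then F' else F.
have fwd_test_sum1 (H : X -> set Y) : (forall z, E z -> B (H z)) ->
    (\esum_(z in E) margR w z (H z) = 1)%E.
  move=> BH; rewrite -esum_fwd_test //; apply: wPr.2.
  by exists E, H.
have sumF := fwd_test_sum1 (fun=> F) (fun _ _ => BF).
have sumG : (\esum_(z in E) margR w z (G z) = 1)%E.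
  by apply: fwd_test_sum1 => z _; rewrite /G; case: ifP.
suff : margR w x F = margR w x (G x) by rewrite /G eqxx.
apply: (esum_cancelD1 (f := fun z => margR w z F)
                      (g := fun z => margR w z (G z)) Ex).
- by move=> *; apply: margR_ge0.
- by move=> *; apply: margR_ge0.
- by move=> z _ /negbTE zx; rewrite /G zx.
- by rewrite sumF sumG.
- by rewrite sumF.
Qed.

Lemma no_infl_BA_Pr_fwdE w :
  Pr (prod_ts A B) w -> no_infl_BA A B w <-> Pr (fwd_prod A B) w.
Proof.
by move=> wPr; split; [apply: no_infl_BA_Pr_fwd | apply: Pr_fwd_no_infl_BA].
Qed.

End forward_product.

Theorem lemma3p3 (R : realType) (X Y : choiceType)
    (A : set (set X)) (B : set (set Y)) (w : X * Y -> R) :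
  test_space A -> test_space B -> Pr (prod_ts A B) w ->
  [/\ no_infl_BA A B w <-> Pr (fwd_prod A B) w,
      no_infl_AB A B w <-> Pr (bwd_prod A B) w &
      non_signaling A B w <-> Pr (fwd_prod A B `|` bwd_prod A B) w].
Proof.
move=> [A_neq0 _ A_cover] [B_neq0 _ B_cover] wPr.
have fwdE := no_infl_BA_Pr_fwdE A_neq0 A_cover wPr.
have wPr_swap : Pr (prod_ts B A) (w \o swap_pair).
  by rewrite -transpose_prod_ts Pr_transpose.
have bwdE : no_infl_AB A B w <-> Pr (bwd_prod A B) w.
  rewrite no_infl_AB_transpose -Pr_transpose transpose_bwd_prod.
  exact (no_infl_BA_Pr_fwdE B_neq0 B_cover wPr_swap).
split=> //; rewrite (Pr_setU (fwd_prod A B)) -fwdE -bwdE.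
by rewrite /non_signaling and_comm.
Qed.
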